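(* In the execution model described in the context, let $T(t)$ be the time needed for the system to execute a schedule of $t$ iterations. If every node performs a local computation at each iteration with probability $p_{\rm comp}/n$, with $p_{\rm comp}>p^{\max}_{\rm comm}$, or if $\tau>1$, then there exists a constant $C<24$ such that $$\mathbb{P}\Big(\frac{1}{t}T(t)\le \frac{C}{n}\big(p_{\rm comp}+2\tau p^{\max}_{\rm comm}\big)\Big)\to1\quad\text{as }t\to\infty.$$
   Context: Execution model. There are $n$ nodes connected by an undirected communication graph $G$ with edge set $E^{\rm comm}$; $\mathcal{N}(k)$ denotes the neighbors of $k$ in $G$. A schedule is an i.i.d. sequence of updates: at each iteration, either a communication edge $(k,\ell)\in E^{\rm comm}$ is chosen with probability $p_{k\ell}$, or a node performs a local computation update; $p_{\rm comm}=\sum_{(k,\ell)\in E^{\rm comm}}p_{k\ell}$ and $p_{\rm comp}=1-p_{\rm comm}$ is the total probability of a local update. A local update at a node takes time $1$ and involves only that node; a communication update on $(k,\ell)$ takes time $\tau>0$ and involves both $k$ and $\ell$; each node executes its updates in the order of the schedule. Formally, with $T_i(0)=0$: if iteration $t$ is a communication on $(k,\ell)$ then $T_k(t+1)=T_\ell(t+1)=\max(T_k(t),T_\ell(t))+\tau$; if it is a local update at $k$ then $T_k(t+1)=T_k(t)+1$; all other $T_i$ are unchanged. $T(t)=\max_iT_i(t)$. Finally $p^{\max}_{\rm comm}=\frac{n}{2}\max_k\sum_{\ell\in\mathcal{N}(k)}p_{k\ell}$. *)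

From HB Require Import structures.
From mathcomp Require Import all_boot all_order all_algebra.
From mathcomp Require Import all_classical all_reals all_analysis.
Set Implicit Arguments. Unset Strict Implicit. Unset Printing Implicit Defensive.
Import Order.TTheory GRing.Theory Num.Theory.
Local Open Scope ring_scope.

Section Model.
Variables (R : realType) (n : nat).

(* An iteration of the schedule: either a communication update on the edge
   {k,l} (encoded as the ordered pair (k,l) with k < l), or a local
   computation update at node k. *)
Definition action := (('I_n * 'I_n) + 'I_n)%type.

(* p k l : probability p_{kl} of the (undirected) edge {k,l}; given as a
   symmetric function, zero outside the communication graph. *)
Definition p_comm (p : 'I_n -> 'I_n -> R) : R :=
  \sum_(k < n) \sum_(l < n | (k < l)%N) p k l.

Definition p_comp (p : 'I_n -> 'I_n -> R) : R := 1 - p_comm p.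

Definition p_comm_max (adj : rel 'I_n) (p : 'I_n -> 'I_n -> R) : R :=
  n%:R / 2 * \big[Num.max/0]_(k < n) \sum_(l < n | adj k l) p k l.

Definition act_prob (p : 'I_n -> 'I_n -> R) (a : action) : R :=
  match a with
  | inl (k, l) => if (k < l)%N then p k l else 0
  | inr k => p_comp p / n%:R
  end.

Definition step (tau : R) (T : 'I_n -> R) (a : action) : 'I_n -> R :=
  match a with
  | inl (k, l) => fun i => if (i == k) || (i == l)
                           then Num.max (T k) (T l) + tau else T i
  | inr k => fun i => if i == k then T k + 1 else T i
  end.

Definition node_times (tau : R) (s : seq action) : 'I_n -> R :=
  foldl (step tau) (fun _ => 0) s.

(* T(t) = max_i T_i(t)  (all T_i are >= 0, so 0 is a neutral base). *)
Definition total_time (tau : R) (s : seq action) : R :=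
  \big[Num.max/0]_(i < n) node_times tau s i.

(* Probability, under the i.i.d. schedule, that the first t iterations
   satisfy the event E (events depending only on the first t iterations). *)
Definition sched_prob (p : 'I_n -> 'I_n -> R) (t : nat)
    (E : t.-tuple action -> bool) : R :=
  \sum_(s : t.-tuple action | E s) \prod_(i < t) act_prob p (tnth s i).

End Model.

From mathcomp Require Import all_boot all_order all_algebra.
From mathcomp Require Import all_classical all_reals all_analysis.
From mathcomp Require Import ring lra.
Import Order.TTheory GRing.Theory Num.Theory.
Import numFieldNormedType.Exports.
Local Open Scope classical_set_scope.
Local Open Scope ring_scope.
Set Implicit Arguments. Unset Strict Implicit. Unset Printing Implicit Defensive.

(* For th >= 0, the process Y_i obtained from exp(th T_i) by
   replacing, at each communication on {k,l}, exp(th max(T_k, T_l)) with the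
   larger exp(th T_k) + exp(th T_l) dominates exp(th T_i) and evolves linearly,
   so the expectation of sum_i Y_i grows at most by a factor 1 + r(th) per
   iteration, where r(th) = (p_comp (e^th - 1) + 2 (2 e^(th tau) - 1) p^max_comm) / n
   (each node takes part in communications with total probability at most
   2 p^max_comm / n).  Markov's inequality then gives
   P(T(t) > a t) <= (1 + n) e^((r(th) - th a) t), and th = 1 if tau <= 1
   (using p^max_comm < p_comp), th = 1/tau if tau > 1, makes r(th) < th a for
   a = 23 (p_comp + 2 tau p^max_comm) / n. *)

Lemma big_tuple_cons (V : nmodType) (T : finType) t (G : t.+1.-tuple T -> V) :
  \sum_(s : t.+1.-tuple T) G s = \sum_(a : T) \sum_(s : t.-tuple T) G [tuple of a :: s].
Proof.
rewrite pair_big /= (reindex (fun q : T * t.-tuple T => [tuple of q.1 :: q.2])) //=.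
exists (fun s : t.+1.-tuple T => (thead s, [tuple of behead s])).
  by move=> [a s] _ /=; congr pair; apply: val_inj.
by move=> s _; rewrite [RHS]tuple_eta; apply: val_inj.
Qed.

Section Schedule.
Variables (R : realType) (n : nat).
Implicit Types (p : 'I_n -> 'I_n -> R).

Definition sched_expect p t (F : seq (action n) -> R) : R :=
  \sum_(s : t.-tuple (action n)) (\prod_(i < t) act_prob p (tnth s i)) * F s.

Lemma sched_expect0 p F : sched_expect p 0 F = F [::].
Proof.
rewrite /sched_expect (eq_bigr (fun _ => F [::])); last first.
  by move=> s _; rewrite big_ord0 mul1r tuple0.
by rewrite sumr_const card_tuple expn0.
Qed.

Lemma sched_expectS p t F :
  sched_expect p t.+1 F =
  \sum_(a : action n) act_prob p a * sched_expect p t (fun s => F (a :: s)).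
Proof.
rewrite /sched_expect big_tuple_cons; apply: eq_bigr => a _; rewrite mulr_sumr.
apply: eq_bigr => s _; rewrite big_ord_recl tnth0 -mulrA; congr (_ * (_ * _)).
by apply: eq_bigr => i _; rewrite tnthS.
Qed.

Lemma sched_expectD p t F G :
  sched_expect p t (fun s => F s + G s) = sched_expect p t F + sched_expect p t G.
Proof. by rewrite /sched_expect -big_split; apply: eq_bigr => s _; rewrite mulrDr. Qed.

Lemma sched_expectZ p t c F :
  sched_expect p t (fun s => c * F s) = c * sched_expect p t F.
Proof. by rewrite /sched_expect mulr_sumr; apply: eq_bigr => s _; rewrite mulrCA. Qed.

Lemma sum_action p (g : action n -> R) :
  \sum_(a : action n) act_prob p a * g a =
  \sum_(k < n) \sum_(l < n | (k < l)%N) p k l * g (inl (k, l))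
  + p_comp p / n%:R * \sum_(k < n) g (inr k).
Proof.
rewrite big_sumType /= mulr_sumr; congr (_ + _).
under [RHS]eq_bigr do rewrite big_mkcond /=.
rewrite pair_big; apply: eq_bigr => -[k l] _ /=.
by case: ifP; rewrite ?mul0r.
Qed.

Section Distribution.
Variable p : 'I_n -> 'I_n -> R.
Hypotheses (n_gt0 : (0 < n)%N) (p_ge0 : forall k l, 0 <= p k l)
  (p_comm_le1 : p_comm p <= 1).

Lemma p_comm_ge0 : 0 <= p_comm p.
Proof. by apply: sumr_ge0 => k _; apply: sumr_ge0. Qed.

Lemma act_prob_ge0 a : 0 <= act_prob p a.
Proof.
case: a => [[k l]|k] /=; first by case: ifP.
by rewrite divr_ge0 // subr_ge0.
Qed.

Lemma sum_act_prob : \sum_(a : action n) act_prob p a = 1.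
Proof.
under eq_bigr do rewrite -[act_prob _ _]mulr1.
rewrite sum_action sumr_const card_ord -[_ *+ n]mulr_natr mul1r divfK ?pnatr_eq0 -?lt0n //.
under eq_bigr do under eq_bigr do rewrite mulr1.
by rewrite /p_comp -/(p_comm p) addrC subrK.
Qed.

Lemma sched_expect_cst t c : sched_expect p t (fun _ => c) = c.
Proof.
elim: t => [|t IHt]; first exact: sched_expect0.
by rewrite sched_expectS IHt -mulr_suml sum_act_prob mul1r.
Qed.

Lemma ler_sched_expect t F G : (forall s, F s <= G s) ->
  sched_expect p t F <= sched_expect p t G.
Proof.
move=> FG; apply: ler_sum => s _; apply: ler_wpM2l => //.
by apply: prodr_ge0 => i _; exact: act_prob_ge0.
Qed.

Lemma sched_prob_le1 t (E : t.-tuple (action n) -> bool) : sched_prob p E <= 1.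
Proof.
rewrite -(sched_expect_cst t 1) /sched_prob big_mkcond; apply: ler_sum => s _.
rewrite mulr1; case: ifP => // _.
by apply: prodr_ge0 => i _; exact: act_prob_ge0.
Qed.

Lemma sched_prob_ge t (E : pred (seq (action n))) (G : seq (action n) -> R) :
  (forall s, 0 <= G s) -> (forall s, ~~ E s -> 1 <= G s) ->
  1 - sched_expect p t G <= sched_prob p (fun s : t.-tuple (action n) => E s).
Proof.
move=> G_ge0 G_ge1.
rewrite -(sched_expect_cst t 1) /sched_expect -sumrB /sched_prob.
rewrite [X in _ <= X]big_mkcond; apply: ler_sum => s _; rewrite -mulrBr.
have w_ge0 : 0 <= \prod_(i < t) act_prob p (tnth s i).
  by apply: prodr_ge0 => i _; exact: act_prob_ge0.
case: ifP => [_|/negbT /G_ge1 Gs]; first by rewrite ler_piMr // lerBlDr lerDl.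
by rewrite mulr_ge0_le0 // subr_le0.
Qed.

Lemma sched_expect_foldl_le (S : Type) (f : S -> action n -> S) (V : S -> R)
    (P : S -> Prop) (rho : R) :
  0 <= rho -> (forall x a, P x -> P (f x a)) ->
  (forall x, P x -> \sum_(a : action n) act_prob p a * V (f x a) <= rho * V x) ->
  forall t x, P x -> sched_expect p t (fun s => V (foldl f x s)) <= rho ^+ t * V x.
Proof.
move=> rho_ge0 Pf drift; elim=> [|t IHt] x Px; first by rewrite sched_expect0 mul1r.
rewrite sched_expectS /=.
apply: le_trans (_ : \sum_a act_prob p a * (rho ^+ t * V (f x a)) <= _).
  apply: ler_sum => a _; apply: ler_wpM2l; first exact: act_prob_ge0.
  by apply: IHt; apply: Pf.
under eq_bigr do rewrite mulrCA.
by rewrite -mulr_sumr exprSr -mulrA ler_wpM2l ?exprn_ge0 // drift.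
Qed.

End Distribution.
End Schedule.

Section Majorant.
Variables (R : realType) (n : nat).
Implicit Types (p : 'I_n -> 'I_n -> R) (adj : rel 'I_n).

Definition mgf_step (a b : R) (Y : 'I_n -> R) (x : action n) : 'I_n -> R :=
  match x with
  | inl (k, l) => fun i => if (i == k) || (i == l) then b * (Y k + Y l) else Y i
  | inr k => fun i => if i == k then a * Y k else Y i
  end.

Lemma mgf_step_ge0 a b Y x : 0 <= a -> 0 <= b -> (forall i, 0 <= Y i) ->
  forall i, 0 <= mgf_step a b Y x i.
Proof.
move=> a_ge0 b_ge0 Y_ge0 i; case: x => [[k l]|k] /=; case: ifP => _ //.
  by rewrite mulr_ge0 // addr_ge0.
by rewrite mulr_ge0.
Qed.

Lemma expR_step_le th tau (T Y : 'I_n -> R) x :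
  (forall i, expR (th * T i) <= Y i) ->
  forall i, expR (th * step tau T x i) <= mgf_step (expR th) (expR (th * tau)) Y x i.
Proof.
move=> TY i; case: x => [[k l]|k] /=; case: ifP => _; [|exact: TY| |exact: TY].
  rewrite mulrDr expRD mulrC ler_wpM2l ?expR_ge0 //.
  have Yk_ge0 := le_trans (expR_ge0 _) (TY k).
  have Yl_ge0 := le_trans (expR_ge0 _) (TY l).
  by case: (leP (T k) (T l)) => _; [rewrite ler_wpDl | rewrite ler_wpDr].
by rewrite mulrDr mulr1 expRD mulrC ler_wpM2l ?expR_ge0.
Qed.

Lemma expR_foldl_step_le th tau s (T Y : 'I_n -> R) :
  (forall i, expR (th * T i) <= Y i) ->
  forall i, expR (th * foldl (step tau) T s i)
            <= foldl (mgf_step (expR th) (expR (th * tau))) Y s i.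
Proof.
elim: s T Y => [|x s IHs] T Y TY //=.
by apply: IHs; exact: expR_step_le.
Qed.

Lemma expR_total_time_le th tau s :
  expR (th * total_time tau s)
  <= 1 + \sum_i foldl (mgf_step (expR th) (expR (th * tau))) (fun _ => 1) s i.
Proof.
set Y := foldl _ _ s.
have TY : forall i, expR (th * node_times tau s i) <= Y i.
  by apply: expR_foldl_step_le => i; rewrite mulr0 expR0.
have Y_ge0 i : 0 <= Y i := le_trans (expR_ge0 _) (TY i).
rewrite /total_time; elim/big_ind: _.
- by rewrite mulr0 expR0 lerDl sumr_ge0.
- by move=> x y; case: (leP x y) => _.
- move=> i _; apply: le_trans (TY i) _.
  by rewrite (bigD1 i) //= addrCA lerDl addr_ge0 // sumr_ge0.
Qed.

Lemma sum_mgf_step_comm a b Y (k l : 'I_n) : k != l ->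
  \sum_i mgf_step a b Y (inl (k, l)) i = \sum_i Y i + (2 * b - 1) * (Y k + Y l).
Proof.
move=> kl /=; have lk : l != k by rewrite eq_sym.
rewrite [LHS](bigD1 k) // [in LHS](bigD1 l) //= [in RHS](bigD1 k) // [in RHS](bigD1 l) //=.
rewrite !eqxx orbT /=.
rewrite (eq_bigr Y); last by move=> i /andP [ik il]; rewrite (negbTE ik) (negbTE il).
ring.
Qed.

Lemma sum_mgf_step_local a b Y (k : 'I_n) :
  \sum_i mgf_step a b Y (inr k) i = \sum_i Y i + (a - 1) * Y k.
Proof.
rewrite /= (bigD1 k) // [in RHS](bigD1 k) //= eqxx.
rewrite (eq_bigr Y); last by move=> i ik; rewrite (negbTE ik).
ring.
Qed.

Lemma row_sum_le_p_comm_max adj p k : (0 < n)%N ->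
  \sum_(l < n | adj k l) p k l <= 2 / n%:R * p_comm_max adj p.
Proof.
move=> n_gt0; have n_neq0 : n%:R != 0 :> R by rewrite pnatr_eq0 -lt0n.
rewrite /p_comm_max mulrA (_ : 2 / n%:R * (n%:R / 2) = 1) ?mul1r; last by field.
exact: le_bigmax.
Qed.

Lemma edge_sum_le adj p (Y : 'I_n -> R) : (0 < n)%N ->
  (forall k l, p k l = p l k) -> (forall k l, 0 <= p k l) ->
  (forall k l, ~~ adj k l -> p k l = 0) -> (forall i, 0 <= Y i) ->
  \sum_(k < n) \sum_(l < n | (k < l)%N) p k l * (Y k + Y l)
  <= 2 / n%:R * p_comm_max adj p * \sum_k Y k.
Proof.
move=> n_gt0 p_sym p_ge0 p_supp Y_ge0.
have -> : \sum_(k < n) \sum_(l < n | (k < l)%N) p k l * (Y k + Y l) =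
    \sum_(k < n) \sum_(l < n) (if (k < l)%N then p k l * Y k else 0)
    + \sum_(k < n) \sum_(l < n) (if (l < k)%N then p k l * Y k else 0).
  rewrite [X in _ = _ + X]exchange_big -big_split /=; apply: eq_bigr => k _.
  rewrite big_mkcond -big_split /=; apply: eq_bigr => l _.
  by case: ifP => _; rewrite ?addr0 // p_sym mulrDr.
rewrite -big_split mulr_sumr /=; apply: ler_sum => k _; rewrite -big_split /=.
apply: le_trans _ (ler_wpM2r (Y_ge0 k) (row_sum_le_p_comm_max adj p k n_gt0)).
rewrite mulr_suml [X in _ <= X]big_mkcond; apply: ler_sum => l _ /=.
case: (boolP (adj k l)) => [_|/p_supp ->]; last by rewrite mul0r; case: ifP; case: ifP.
by case: ltngtP => _; rewrite ?addr0 ?add0r ?mulr_ge0.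
Qed.

End Majorant.

Section Chernoff.
Variables (R : realType) (n : nat).
Implicit Types (p : 'I_n -> 'I_n -> R) (adj : rel 'I_n).

Definition drift_rate adj p (a b : R) : R :=
  (p_comp p * (a - 1) + 2 * (2 * b - 1) * p_comm_max adj p) / n%:R.

Lemma drift_rate_lt adj p (tau th C : R) : (0 < n)%N ->
  p_comp p * (expR th - 1) + 2 * (2 * expR (th * tau) - 1) * p_comm_max adj p
    < th * (C * (p_comp p + 2 * tau * p_comm_max adj p)) ->
  drift_rate adj p (expR th) (expR (th * tau))
    < th * (C / n%:R * (p_comp p + 2 * tau * p_comm_max adj p)).
Proof.
move=> n_gt0 rate_lt; have n_pos : 0 < n%:R :> R by rewrite ltr0n.
rewrite /drift_rate [X in _ < X](_ : _ = th * (C * (p_comp p + 2 * tau * p_comm_max adj p))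
  / n%:R); last by field; rewrite gt_eqF.
by rewrite ltr_pM2r ?invr_gt0.
Qed.

Section Drift.
Variables (adj : rel 'I_n) (p : 'I_n -> 'I_n -> R).
Hypotheses (n_gt0 : (0 < n)%N) (p_sym : forall k l, p k l = p l k)
  (p_ge0 : forall k l, 0 <= p k l) (p_supp : forall k l, ~~ adj k l -> p k l = 0)
  (p_comm_le1 : p_comm p <= 1).

Lemma p_comm_le_p_comm_max : p_comm p <= p_comm_max adj p.
Proof.
have := edge_sum_le (Y := fun _ => 1) n_gt0 p_sym p_ge0 p_supp (fun _ => ler01).
rewrite sumr_const card_ord.
under eq_bigr do rewrite -mulr_suml.
rewrite -mulr_suml -/(p_comm p).
have n_neq0 : n%:R != 0 :> R by rewrite pnatr_eq0 -lt0n.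
rewrite (_ : 2 / n%:R * p_comm_max adj p * n%:R = 2 * p_comm_max adj p); last by field.
lra.
Qed.

Lemma p_comm_max_ge0 : 0 <= p_comm_max adj p.
Proof. exact: le_trans (p_comm_ge0 p_ge0) p_comm_le_p_comm_max. Qed.

Lemma sum_mgf_step_expect a b (Y : 'I_n -> R) : 1 <= b -> (forall i, 0 <= Y i) ->
  \sum_(x : action n) act_prob p x * \sum_i mgf_step a b Y x i
  <= (1 + drift_rate adj p a b) * \sum_i Y i.
Proof.
move=> b_ge1 Y_ge0; set S := \sum_i Y i.
set E := \sum_(k < n) \sum_(l < n | (k < l)%N) p k l * (Y k + Y l).
have n_neq0 : n%:R != 0 :> R by rewrite pnatr_eq0 -lt0n.
rewrite sum_action.
have -> : \sum_(k < n) \sum_(l < n | (k < l)%N) p k l * \sum_i mgf_step a b Y (inl (k, l)) i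
    = p_comm p * S + (2 * b - 1) * E.
  rewrite /p_comm /E mulr_suml mulr_sumr -big_split /=; apply: eq_bigr => k _.
  rewrite mulr_suml mulr_sumr -big_split /=; apply: eq_bigr => l kl.
  rewrite (sum_mgf_step_comm a); first by rewrite -/S; ring.
  by rewrite -val_eqE neq_ltn kl.
have -> : \sum_(k < n) \sum_i mgf_step a b Y (inr k) i = n%:R * S + (a - 1) * S.
  under eq_bigr do rewrite sum_mgf_step_local.
  by rewrite big_split /= sumr_const card_ord -mulr_sumr mulr_natl.
have -> : (1 + drift_rate adj p a b) * S = p_comm p * S
    + (2 * b - 1) * (2 / n%:R * p_comm_max adj p * S)
    + p_comp p / n%:R * (n%:R * S + (a - 1) * S).
  by rewrite /drift_rate /p_comp; field.
by rewrite lerD2r lerD2l ler_wpM2l ?subr_ge0 ?edge_sum_le //; lra.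
Qed.

Lemma drift_rate_ge0 a b : 1 <= a -> 1 <= b -> 0 <= drift_rate adj p a b.
Proof.
move=> a_ge1 b_ge1; have B_ge0 := p_comm_max_ge0.
apply: divr_ge0 => //; apply: addr_ge0; apply: mulr_ge0; rewrite ?subr_ge0 //; lra.
Qed.

Lemma sched_expect_mgf_le a b t : 1 <= a -> 1 <= b ->
  sched_expect p t (fun s => \sum_i foldl (mgf_step a b) (fun _ => 1) s i)
  <= (1 + drift_rate adj p a b) ^+ t * n%:R.
Proof.
move=> a_ge1 b_ge1.
have rho_ge0 : 0 <= 1 + drift_rate adj p a b by rewrite addr_ge0 ?drift_rate_ge0.
have step_ge0 (Z : 'I_n -> R) (x : action n) :
    (forall i, 0 <= Z i) -> forall i, 0 <= mgf_step a b Z x i.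
  by move=> Z_ge0; apply: mgf_step_ge0 => //; lra.
have := sched_expect_foldl_le p_ge0 p_comm_le1 rho_ge0 step_ge0
  (fun Z => @sum_mgf_step_expect a b Z b_ge1) t (x := fun _ => 1).
by rewrite sumr_const card_ord; apply.
Qed.

Lemma total_time_tail tau th (a : R) t : 0 < tau -> 0 <= th -> 0 <= a ->
  1 - (1 + n%:R) * expR (drift_rate adj p (expR th) (expR (th * tau)) - th * a) ^+ t
  <= sched_prob p (fun s : t.-tuple (action n) => total_time tau s / t%:R <= a).
Proof.
move=> tau_gt0 th_ge0 a_ge0.
set E1 := expR th; set Et := expR (th * tau); set r := drift_rate adj p E1 Et.
pose Y s := \sum_i foldl (mgf_step E1 Et) (fun _ : 'I_n => 1) s i.
pose q := expR (- (th * a * t%:R)).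
have E1_ge1 : 1 <= E1 by rewrite /E1 -expR0 ler_expR.
have Et_ge1 : 1 <= Et by rewrite /Et -expR0 ler_expR mulr_ge0 // ltW.
have r_ge0 : 0 <= r := drift_rate_ge0 E1_ge1 Et_ge1.
have EY : sched_expect p t Y <= (1 + r) ^+ t * n%:R := sched_expect_mgf_le t E1_ge1 Et_ge1.
apply: le_trans _ (sched_prob_ge n_gt0 p_ge0 p_comm_le1 t
  (E := fun s => total_time tau s / t%:R <= a)
  (G := fun s => expR (th * total_time tau s) * q) _ _).
- rewrite lerD2l lerN2.
  apply: le_trans (_ : sched_expect p t (fun s => q * (1 + Y s)) <= _).
    apply: (ler_sched_expect p_ge0 p_comm_le1 t) => s.
    by rewrite mulrC ler_wpM2l ?expR_ge0 // expR_total_time_le.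
  rewrite sched_expectZ sched_expectD sched_expect_cst //.
  have -> : expR (r - th * a) ^+ t = q * expR r ^+ t.
    by rewrite -!expRM_natr -expRD; congr expR; ring.
  rewrite mulrCA ler_wpM2l ?expR_ge0 //.
  have rt_ge1 : 1 <= (1 + r) ^+ t by rewrite exprn_ege1 // lerDl.
  have rt_le : (1 + r) ^+ t <= expR r ^+ t.
    by rewrite lerXn2r ?nnegrE ?expR_ge0 ?expR_ge1Dx // addr_ge0.
  have n_ge0 : 0 <= n%:R :> R := ler0n R n.
  have := ler_wpM2l (addr_ge0 ler01 n_ge0) rt_le.
  nra.
- by move=> s; rewrite mulr_ge0 ?expR_ge0.
- move=> s; rewrite -ltNge => aT.
  have t_gt0 : (0 < t)%N.
    by rewrite lt0n; apply: contraTneq aT => ->; rewrite invr0 mulr0 -leNgt.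
  rewrite ltr_pdivlMr ?ltr0n // in aT.
  by rewrite /q -expRD -[leLHS]expR0 ler_expR -mulrA -mulrN -mulrDr mulr_ge0 // subr_ge0 ltW.
Qed.

End Drift.
End Chernoff.

Section RateChoice.
Variable R : realType.

Lemma expR_sub1_le (x : R) : expR x - 1 <= x * expR x.
Proof. have := expR_ge1Dx (- x); have := expRxMexpNx_1 x; have := expR_ge0 x; nra. Qed.

Lemma expR1_le4 : expR 1 <= 4 :> R.
Proof.
have e : expR 1 = expR (1 / 2) ^+ 2 :> R by rewrite -expRM_natr; congr expR; field.
have := expR_sub1_le (1 / 2); have := expR_ge0 (1 / 2 : R); rewrite e; nra.
Qed.

Lemma expR_sub1_le4 (x : R) : 0 <= x <= 1 -> expR x - 1 <= 4 * x.
Proof.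
move=> /andP [x_ge0 x_le1].
have ex_le4 : expR x <= 4 by apply: le_trans expR1_le4; rewrite ler_expR.
have := expR_sub1_le x; nra.
Qed.

Lemma exists_rate (A B tau : R) : 0 <= A -> 0 <= B -> 0 < A + B -> 0 < tau ->
  B < A \/ 1 < tau ->
  exists2 th, 0 <= th &
    A * (expR th - 1) + 2 * (2 * expR (th * tau) - 1) * B
    < th * (23 * (A + 2 * tau * B)).
Proof.
move=> A_ge0 B_ge0 AB_gt0 tau_gt0 BA_or_tau_gt1.
have e4 := expR1_le4.
case: (leP tau 1) => [tau_le1|tau_gt1].
  have BA : B < A by case: BA_or_tau_gt1 => // /lt_le_trans/(_ tau_le1); rewrite ltxx.
  exists 1 => //; rewrite !mul1r.
  have := expR_sub1_le4 (x := 1); have := expR_sub1_le4 (x := tau).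
  rewrite ler01 tau_le1 ltW //= => ? ?; nra.
have u_gt0 : 0 < tau^-1 by rewrite invr_gt0.
have u_le1 : tau^-1 <= 1 by rewrite invf_le1 // ltW.
have u_tau : tau^-1 * tau = 1 by rewrite mulVf // gt_eqF.
exists tau^-1; first exact: ltW.
have -> : tau^-1 * (23 * (A + 2 * tau * B)) = 23 * (tau^-1 * A) + 46 * B.
  by field; rewrite gt_eqF.
rewrite u_tau.
have := expR_sub1_le4 (x := tau^-1); rewrite ltW //= u_le1 => eu.
have uB_le : tau^-1 * B <= B by rewrite ler_piMl.
have uAB_gt0 : 0 < tau^-1 * A + tau^-1 * B by rewrite -mulrDr mulr_gt0.
have uA_ge0 : 0 <= tau^-1 * A by rewrite mulr_ge0 // ltW.
nra.
Qed.

Lemma squeeze_cvg1_geometric (u : nat -> R) (c z : R) : `|z| < 1 ->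
  (forall t, 1 - c * z ^+ t <= u t <= 1) -> u @ \oo --> (1 : R).
Proof.
move=> z_lt1 u_bound.
apply: (@squeeze_cvgr _ _ _ _ (fun t => 1 - geometric c z t) (fun _ => 1)).
- by apply: nearW => t; exact: u_bound.
- rewrite -[X in _ --> X](subr0 (1 : R)).
  exact: (cvgB (cvg_cst (1 : R)) (cvg_geometric c z_lt1)).
- exact: cvg_cst.
Qed.

End RateChoice.

Unset Implicit Arguments.

Theorem theorem2 (R : realType) (n : nat) (adj : rel 'I_n)
    (p : 'I_n -> 'I_n -> R) (tau : R) :
  (0 < n)%N ->
  (* undirected simple communication graph *)
  (forall k l, adj k l = adj l k) ->
  (forall k, ~~ adj k k) ->
  (* edge probabilities: symmetric, nonnegative, supported on the graph *)
  (forall k l, p k l = p l k) ->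
  (forall k l, 0 <= p k l) ->
  (forall k l, ~~ adj k l -> p k l = 0) ->
  p_comm p <= 1 ->
  0 < tau ->
  (p_comm_max adj p < p_comp p \/ 1 < tau) ->
  exists C : R, C < 24 /\
    (fun t : nat =>
       sched_prob p (fun s : t.-tuple (action n) =>
         total_time tau (tval s) / t%:R
           <= C / n%:R * (p_comp p + 2 * tau * p_comm_max adj p)))
    @ \oo --> (1 : R).
Proof.
move=> n_gt0 _ _ p_sym p_ge0 p_supp p_comm_le1 tau_gt0 rate_case.
set A := p_comp p; set B := p_comm_max adj p.
have A_ge0 : 0 <= A by rewrite subr_ge0.
have B_ge0 : 0 <= B := p_comm_max_ge0 n_gt0 p_sym p_ge0 p_supp.
have AB_gt0 : 0 < A + B.
  by have := p_comm_le_p_comm_max n_gt0 p_sym p_ge0 p_supp; rewrite -/B /A /p_comp; lra.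
have [th th_ge0 th_rate] := exists_rate A_ge0 B_ge0 AB_gt0 tau_gt0 rate_case.
exists 23; split; first lra.
set a := 23 / n%:R * (A + 2 * tau * B).
have a_ge0 : 0 <= a.
  by rewrite mulr_ge0 ?divr_ge0 //; have := mulr_ge0 (ltW tau_gt0) B_ge0; lra.
apply: (squeeze_cvg1_geometric (c := 1 + n%:R)
  (z := expR (drift_rate adj p (expR th) (expR (th * tau)) - th * a))) => [|t].
  by rewrite ger0_norm ?expR_ge0 // expR_lt1 subr_lt0 drift_rate_lt.
by rewrite sched_prob_le1 // andbT total_time_tail.
Qed.
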